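(* Let $p(y)$ be a probability distribution on $\mathcal{Y}$, $p(z\mid y)$ conditional distributions on $\mathcal{Z}$, $\phi:\mathcal{Y}\times\mathcal{Z}\to\Phi\subseteq\mathbb{R}^{D_\phi}$, and let $\gamma(y)=\mathbb{E}_{z\sim p(z\mid y)}[\phi(y,z)]$ be integrable as a function of $y$. For an integrable $f:\mathcal{Y}\times\Phi\to\mathbb{R}^{D_f}$ write $I(f)=\mathbb{E}_{y\sim p(y)}[f(y,\gamma(y))]$. Suppose an inner estimator $\mathcal{I}$ produces, for each $y\in\mathcal{Y}$, a random estimate $\hat\gamma_y\in\Phi$ of $\gamma(y)$ which is not exact, in the sense that for every $y$ the estimate $\hat\gamma_y$ has nonzero variance (so $\gamma(y)$ is not computed exactly). Then there does not exist an outer estimator $\mathcal{J}$ which, for every integrable $f$, maps a sample set $\hat\zeta=\{(y_1,\hat\gamma_{y_1}),\dots,(y_n,\hat\gamma_{y_n})\}$ (with the $\hat\gamma_{y_i}$ generated by $\mathcal{I}$) to an estimate $\psi(\hat\zeta,f)$ such that simultaneously (i) $\mathbb{E}[\psi(\hat\zeta,f)]=I(f)$ for every integrable $f$, and (ii) $\mathbb{E}_{y\sim p(y)}\big[\mathbb{E}[f(y,\hat\gamma_y)\mid y]\big]-\mathbb{E}[\psi(\hat\zeta,f)]\ge0$ for every integrable $f$. The same conclusion holds if the inequality in (ii) is replaced by $\le 0$.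
   Context: Condition (ii) says that combining the inner estimator with an exact outer expectation never yields a negatively (respectively, in the reversed version, positively) biased estimator for any $f$. The conclusion states that no general-purpose nested estimation scheme of this form can be unbiased for all integrable $f$. *)

From HB Require Import structures.
From mathcomp Require Import all_boot all_order all_algebra.
From mathcomp Require Import all_classical all_reals all_analysis.

Set Implicit Arguments.
Unset Strict Implicit.
Unset Printing Implicit Defensive.
Import Order.TTheory GRing.Theory Num.Theory.
Local Open Scope classical_set_scope.
Local Open Scope ring_scope.

(* Vectors of R^D are represented by D.-tuple R, which carries the product
   (coordinate-generated) sigma-algebra of mathcomp-analysis. *)

Section nested.
Context {R : realType}.
Context {dY dZ : measure_display} {Y : measurableType dY} {Z : measurableType dZ}.
Context {Dphi Df : nat}.

Local Open Scope ereal_scope.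

Definition gamma (pz : R.-pker Y ~> Z) (phi : Y -> Z -> Dphi.-tuple R)
    (y : Y) : Dphi.-tuple R :=
  [tuple fine (\int[pz y]_z (tnth (phi y z) j)%:E) | j < Dphi].

Definition Ival (PY : probability Y R) (g : Y -> Dphi.-tuple R)
    (f : Y -> Dphi.-tuple R -> Df.-tuple R) : Df.-tuple R :=
  [tuple fine (\int[PY]_y (tnth (f y (g y)) j)%:E) | j < Df].

(* j-th component of E_{y ~ p(y)} [ E [ f(y, hat gamma_y) | y ] ],
   where hat gamma_y ~ k y *)
Definition nested_mean (PY : probability Y R)
    (k : R.-pker Y ~> Dphi.-tuple R)
    (f : Y -> Dphi.-tuple R -> Df.-tuple R) (j : 'I_Df) : \bar R :=
  \int[PY]_y (\int[k y]_x (tnth (f y x) j)%:E).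

(* f : Y x Phi -> R^Df is integrable: all the expectations appearing in the
   statement (I(f) and the nested expectation) exist and are finite *)
Definition integrable_f (PY : probability Y R) (g : Y -> Dphi.-tuple R)
    (k : R.-pker Y ~> Dphi.-tuple R)
    (f : Y -> Dphi.-tuple R -> Df.-tuple R) : Prop :=
  forall j : 'I_Df,
    [/\ PY.-integrable setT (fun y => (tnth (f y (g y)) j)%:E),
        (forall y, (k y).-integrable setT (fun x => (tnth (f y x) j)%:E)) &
        PY.-integrable setT (fun y => \int[k y]_x (tnth (f y x) j)%:E)].

End nested.

(* Variance of a real function X under a (probability) measure mu; this is
   literally the library's  'V_mu[X] = 'E[(X - fine 'E[X])^2]  written for a
   measure that is not syntactically of type [probability] (here [k y]). *)
Definition variance_of {R : realType} {d} {T : measurableType d}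
    (mu : {measure set T -> \bar R}) (X : T -> R) : \bar R :=
  (\int[mu]_x ((X x - fine (\int[mu]_t (X t)%:E)) ^+ 2)%:E)%E.

(* The inner estimator k is not exact: for every y, hat gamma_y ~ k y has
   nonzero variance (the covariance matrix is nonzero, i.e. some coordinate
   has nonzero variance). *)
Definition not_exact {R : realType} {dY} {Y : measurableType dY} {D : nat}
    (k : R.-pker Y ~> D.-tuple R) : Prop :=
  forall y : Y, exists j : 'I_D,
    variance_of (k y) (fun x : D.-tuple R => tnth x j) != 0%E.

(* An outer estimator J: a probability space (Omega, P), a sample size n,
   random sample points y_i and inner estimates hat gamma_{y_i} generated by
   the inner estimator k (given y_i, hat gamma_{y_i} ~ k y_i), and an
   estimate psi(zeta, f) computed from the sample set zeta and f.
   [cmp] is the comparison used in condition (ii): (>= 0) or (<= 0). *)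
Definition outer_estimator_exists {R : realType} {dY} {Y : measurableType dY}
    {Dphi Df : nat} (PY : probability Y R) (g : Y -> Dphi.-tuple R)
    (k : R.-pker Y ~> Dphi.-tuple R) (cmp : \bar R -> Prop) : Prop :=
  exists (dO : measure_display) (Omega : measurableType dO)
         (P : probability Omega R) (n : nat)
         (ys : 'I_n -> Omega -> Y) (gs : 'I_n -> Omega -> Dphi.-tuple R)
         (psi : seq (Y * Dphi.-tuple R) ->
                (Y -> Dphi.-tuple R -> Df.-tuple R) -> Df.-tuple R),
    let zeta := fun w : Omega => [seq (ys i w, gs i w) | i <- enum 'I_n] in
    [/\
        (forall i, measurable_fun setT (ys i)),
        (forall i, measurable_fun setT (gs i)),
        (* hat gamma_{y_i} is generated by the inner estimator k *)
        (forall i (A : set Y) (B : set (Dphi.-tuple R)),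
           measurable A -> measurable B ->
           P (ys i @^-1` A `&` gs i @^-1` B) =
           (\int[P]_(w in ys i @^-1` A) k (ys i w) B)%E),
        (forall f, integrable_f PY g k f -> forall j : 'I_Df,
           P.-integrable setT (fun w => (tnth (psi (zeta w) f) j)%:E) /\
           (\int[P]_w (tnth (psi (zeta w) f) j)%:E)%E = (tnth (Ival PY g f) j)%:E) &
        (forall f, integrable_f PY g k f -> forall j : 'I_Df,
           cmp (nested_mean PY k f j - \int[P]_w (tnth (psi (zeta w) f) j)%:E)%E)].

From HB Require Import structures.
From mathcomp Require Import all_boot all_order all_algebra.
From mathcomp Require Import all_classical all_reals all_analysis.
From mathcomp Require Import measurable_realfun.
Import Order.TTheory GRing.Theory Num.Theory.
Local Open Scope classical_set_scope.
Local Open Scope ring_scope.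

(* Conditions (i) and (ii) together say that the nested mean
   E_y E[f(y, hat gamma_y) | y] is never below (resp. above) I(f).  An inexact
   inner estimator leaves, for every y, positive mass e(y) on the event
   hat gamma_y <> gamma(y), so f(y, x) := (c / e(y)) 1[x <> gamma(y)] has
   I(f) = 0 while its nested mean is c, for any real c. *)

Lemma measurable_neq_tuple {R : realType} {D : nat} (c : D.-tuple R) :
  measurable [set x : D.-tuple R | x != c].
Proof.
have -> : [set x : D.-tuple R | x != c] =
    \bigcup_(j in [set: 'I_D]) ((fun x => tnth x j) @^-1` ~` [set tnth c j]).
  apply/seteqP; split => x /=.
    move=> xc; apply: contrapT => xjc; move/eqP: xc; apply.
    by apply: eq_from_tnth => j; apply: contrapT => ?; apply: xjc; exists j.
  by move=> [j _ /= xjc]; apply/eqP => xc; apply: xjc; rewrite xc.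
apply: fin_bigcup_measurable; first exact: finite_finset.
move=> j _; rewrite -[X in measurable X]setTI.
apply: measurable_tnth => //; apply: measurableC; exact: measurable_set1.
Qed.

Lemma variance_of_ae_cst {R : realType} {d} {T : measurableType d}
    (mu : {measure set T -> \bar R}) (X : T -> R) (a : R) :
  mu setT = 1%E -> measurable_fun setT X ->
  {ae mu, forall x, X x = a} -> variance_of mu X = 0%E.
Proof.
move=> mu1 mX Xa.
have int_ae (f h : T -> R) : measurable_fun setT f -> measurable_fun setT h ->
    {ae mu, forall x, X x = a -> f x = h x} ->
    (\int[mu]_x (f x)%:E = \int[mu]_x (h x)%:E)%E.
  move=> mf mh fh; apply: ae_eq_integral => //;
    [exact/measurable_EFinP | exact/measurable_EFinP |].
  by apply: filterS2 Xa fh => x Xxa fxh _; rewrite fxh.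
have mean : (\int[mu]_x (X x)%:E = a%:E)%E.
  rewrite (int_ae _ (cst a)) //; last exact: aeW.
  by rewrite (integral_cst _ _ a%:E) // mu1 mule1.
rewrite /variance_of mean /= (int_ae _ (cst 0)) //.
- by rewrite (integral_cst _ _ 0%:E) // mul0e.
- exact/measurable_funX/measurable_funB.
- by apply: aeW => x ->; rewrite subrr expr0n.
Qed.

Lemma not_exact_measure_neq_gt0 {R : realType} {dY} {Y : measurableType dY}
    {D : nat} (k : R.-pker Y ~> D.-tuple R) (g : Y -> D.-tuple R) (y : Y) :
  not_exact k -> (0 < k y [set x | x != g y])%E.
Proof.
move=> /(_ y) [j]; apply: contraNT; rewrite lt0e measure_ge0 andbT negbK.
move=> /eqP neq0; apply/eqP/(@variance_of_ae_cst _ _ _ _ _ (tnth (g y) j)).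
- exact: prob_kernel.
- exact: measurable_tnth.
- exists [set x | x != g y]; split => //; first exact: measurable_neq_tuple.
  by move=> x /= xj; apply/eqP => xg; apply: xj; rewrite xg.
Qed.

Section bias_witness.
Context {R : realType} {dY : measure_display} {Y : measurableType dY}.
Context {Dphi Df : nat}.
Variables (PY : probability Y R) (g : Y -> Dphi.-tuple R).
Variable k : R.-pker Y ~> Dphi.-tuple R.
Hypothesis k_not_exact : not_exact k.

Let miss (y : Y) : set (Dphi.-tuple R) := [set x | x != g y].

Let measurable_miss y : measurable (miss y).
Proof. exact: measurable_neq_tuple. Qed.

Let miss_prob (y : Y) : R := fine (k y (miss y)).

Let k_miss_lty y : (k y (miss y) < +oo)%E.
Proof.
apply: (@le_lt_trans _ _ (k y setT)); last by rewrite prob_kernel ltry.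
by apply: le_measure; rewrite ?inE //; exact: measurable_miss.
Qed.

Let miss_probE y : (miss_prob y)%:E = k y (miss y).
Proof. by rewrite fineK // ge0_fin_numE ?measure_ge0. Qed.

Let miss_prob_neq0 y : miss_prob y != 0.
Proof.
by rewrite -(@eqe R _ 0) miss_probE gt_eqF // not_exact_measure_neq_gt0.
Qed.

Definition bias_witness (c : R) (y : Y) (x : Dphi.-tuple R) : Df.-tuple R :=
  [tuple c / miss_prob y * (\1_(miss y) x : R) | _ < Df].

Variable c : R.

Let tnth_bias_witness y x j :
  tnth (bias_witness c y x) j = c / miss_prob y * (\1_(miss y) x : R).
Proof. by rewrite tnth_mktuple. Qed.

Let integrable_indic_miss y :
  (k y).-integrable setT (fun x => (\1_(miss y) x : R)%:E).
Proof.
apply/integrableP; split; first exact/measurable_EFinP/measurable_indic.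
under eq_integral do rewrite gee0_abs ?lee_fin //.
by rewrite integral_indic // setIT.
Qed.

Lemma bias_witness_at_center y j : tnth (bias_witness c y (g y)) j = 0.
Proof.
by rewrite tnth_bias_witness indicE memNset ?mulr0 //= /miss /= eqxx.
Qed.

Lemma integral_bias_witness y j :
  (\int[k y]_x (tnth (bias_witness c y x) j)%:E = c%:E)%E.
Proof.
under eq_integral do rewrite tnth_bias_witness EFinM.
rewrite integralZl // integral_indic // setIT.
by rewrite -miss_probE -EFinM divfK.
Qed.

Lemma integrable_f_bias_witness : integrable_f PY g k (bias_witness c).
Proof.
move=> j; split.
- under eq_fun do rewrite bias_witness_at_center.
  exact: (finite_measure_integrable_cst _ 0).
- move=> y; under eq_fun do rewrite tnth_bias_witness EFinM.
  exact: integrableZl.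
- under eq_fun do rewrite integral_bias_witness.
  exact: (finite_measure_integrable_cst _ c).
Qed.

Lemma nested_mean_bias_witness j : nested_mean PY k (bias_witness c) j = c%:E.
Proof.
rewrite /nested_mean; under eq_integral do rewrite integral_bias_witness.
rewrite (integral_cst _ _ c%:E) //.
transitivity (c%:E * 1)%E; last exact: mule1.
by congr (mule _ _); exact: probability_setT.
Qed.

Lemma Ival_bias_witness j : tnth (Ival PY g (bias_witness c)) j = 0.
Proof.
rewrite tnth_mktuple; under eq_integral do rewrite bias_witness_at_center.
by rewrite integral0.
Qed.

End bias_witness.

Lemma outer_estimator_cmp_everywhere {R : realType} {dY : measure_display}
    {Y : measurableType dY} {Dphi Df : nat} (PY : probability Y R)
    (g : Y -> Dphi.-tuple R) (k : R.-pker Y ~> Dphi.-tuple R)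
    (cmp : \bar R -> Prop) :
  (0 < Df)%N -> not_exact k ->
  @outer_estimator_exists R dY Y Dphi Df PY g k cmp -> forall c : R, cmp c%:E.
Proof.
move=> Df_gt0 k_not_exact.
move=> [dO [Om [P [n [ys [gs [psi /= [_ _ _ unbiased sign]]]]]]]] c.
pose j := Ordinal Df_gt0.
have intf : integrable_f PY g k (bias_witness (Df := Df) g k c).
  exact: integrable_f_bias_witness.
have := sign _ intf j; have [_ ->] := unbiased _ intf j.
by rewrite nested_mean_bias_witness // Ival_bias_witness // sube0.
Qed.

Theorem theorem3 (R : realType) (dY dZ : measure_display)
  (Y : measurableType dY) (Z : measurableType dZ) (Dphi Df : nat)
  (PY : probability Y R) (pz : R.-pker Y ~> Z)
  (phi : Y -> Z -> Dphi.-tuple R)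
  (k : R.-pker Y ~> Dphi.-tuple R) :
  (0 < Df)%N ->
  (forall y (j : 'I_Dphi),
     (pz y).-integrable setT (fun z => (tnth (phi y z) j)%:E)) ->
  (forall j : 'I_Dphi,
     PY.-integrable setT (fun y => (tnth (gamma pz phi y) j)%:E)) ->
  not_exact k ->
  ~ @outer_estimator_exists R dY Y Dphi Df PY (gamma pz phi) k
      (fun e => (0 <= e)%E) /\
  ~ @outer_estimator_exists R dY Y Dphi Df PY (gamma pz phi) k
      (fun e => (e <= 0)%E).
Proof.
move=> Df_gt0 _ _ k_not_exact; split => /outer_estimator_cmp_everywhere.
- by move=> /(_ Df_gt0 k_not_exact (-1)); rewrite lee_fin ler0N1.
- by move=> /(_ Df_gt0 k_not_exact 1); rewrite lee_fin ler10.
Qed.
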